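(* The category of pastures has coequalizers: for any pastures $P_1,P_2$ and morphisms $f,g:P_1\to P_2$ there is a pasture $Q$ with a morphism $q:P_2\to Q$ satisfying $q\circ f=q\circ g$, such that for every pasture $Q'$ and morphism $q':P_2\to Q'$ with $q'\circ f=q'\circ g$ there is a unique morphism $u:Q\to Q'$ with $u\circ q=q'$.
   Context: A pasture is a multiplicative monoid $P$ with a zero element $0$ (absorbing: $0\cdot x=0$ for all $x$) such that $P^\times=P\setminus\{0\}$ is an abelian group under the multiplication, together with an involution $x\mapsto -x$ of $P$ fixing $0$, and a subset $N_P\subseteq P^3$ (the nullset; one writes $a+b+c=0$ to mean $(a,b,c)\in N_P$) such that: (1) $N_P$ is invariant under permutations of the three coordinates; (2) if $a+b+c=0$ then $da+db+dc=0$ for every $d\in P$; (3) $a+b+0=0$ if and only if $a=-b$. A morphism of pastures $f:P_1\to P_2$ is a multiplicative map with $f(0)=0$, $f(1)=1$, $f(-a)=-f(a)$ for all $a$, and such that $f(a)+f(b)+f(c)=0$ in $N_{P_2}$ whenever $a+b+c=0$ in $N_{P_1}$. *)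

Set Implicit Arguments.

Record Pasture : Type := {
  carrier :> Type;
  pzero : carrier;
  pone : carrier;
  pmul : carrier -> carrier -> carrier;
  pneg : carrier -> carrier;
  pnull : carrier -> carrier -> carrier -> Prop;
  pmulA : forall x y z, pmul x (pmul y z) = pmul (pmul x y) z;
  pmul1l : forall x, pmul pone x = x;
  pmul1r : forall x, pmul x pone = x;
  pmul0l : forall x, pmul pzero x = pzero;
  pmul0r : forall x, pmul x pzero = pzero;
  pone_neq0 : pone <> pzero;
  pmul_neq0 : forall x y, x <> pzero -> y <> pzero -> pmul x y <> pzero;
  pmulC_units : forall x y, x <> pzero -> y <> pzero -> pmul x y = pmul y x;
  pinv_ex : forall x, x <> pzero -> exists y, y <> pzero /\ pmul x y = pone;
  pnegK : forall x, pneg (pneg x) = x;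
  pneg0 : pneg pzero = pzero;
  pnull_perm12 : forall a b c, pnull a b c -> pnull b a c;
  pnull_perm23 : forall a b c, pnull a b c -> pnull a c b;
  pnull_scale : forall d a b c, pnull a b c -> pnull (pmul d a) (pmul d b) (pmul d c);
  pnull_zero : forall a b, pnull a b pzero <-> a = pneg b
}.

Record PastureHom (P1 P2 : Pasture) : Type := {
  hfun :> carrier P1 -> carrier P2;
  hmul : forall a b, hfun (pmul P1 a b) = pmul P2 (hfun a) (hfun b);
  h0 : hfun (pzero P1) = pzero P2;
  h1 : hfun (pone P1) = pone P2;
  hneg : forall a, hfun (pneg P1 a) = pneg P2 (hfun a);
  hnull : forall a b c, pnull P1 a b c -> pnull P2 (hfun a) (hfun b) (hfun c)
}.

(** The coequalizer of [f, g : P1 -> P2] is the quotient of [P2] by the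
    smallest equivalence relation identifying [d * f x] with [d * g x] for all
    [d] and [x].  This relation is multiplicative (hence also compatible with
    [-a = (-1) * a]), and its zero class is [{0}] because pasture morphisms
    reflect [0]; these two facts are exactly what is needed for the set of
    classes, with the image of the nullset as nullset, to be a pasture.  A
    morphism [q'] with [q' o f = q' o g] is constant on classes, so it factors
    uniquely through the projection, which is surjective. *)
From Stdlib Require Import Classical ClassicalEpsilon FunctionalExtensionality
  PropExtensionality ProofIrrelevance Relations RelationClasses.
Set Implicit Arguments.

Section PastureArithmetic.

Context {P : Pasture}.

Lemma pmulC (x y : P) : pmul P x y = pmul P y x.
Proof.
  destruct (classic (x = pzero P)) as [->|Hx]; [now rewrite pmul0l, pmul0r|].
  destruct (classic (y = pzero P)) as [->|Hy]; [now rewrite pmul0l, pmul0r|].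
  now apply pmulC_units.
Qed.

Lemma pmul_eq0 (x y : P) : pmul P x y = pzero P -> x = pzero P \/ y = pzero P.
Proof.
  intro Hxy. apply NNPP. intros [Hx Hy]%not_or_and.
  exact (pmul_neq0 _ Hx Hy Hxy).
Qed.

(* Scale the null triple [(-d, d, 0)] by [e]. *)
Lemma pmulNr (e d : P) : pmul P e (pneg P d) = pneg P (pmul P e d).
Proof.
  assert (Hnull : pnull P (pneg P d) d (pzero P)) by now apply pnull_zero.
  apply (pnull_scale P e) in Hnull. rewrite pmul0r in Hnull.
  now apply pnull_zero.
Qed.

Lemma pnegE (a : P) : pneg P a = pmul P (pneg P (pone P)) a.
Proof. now rewrite pmulC, pmulNr, pmul1r. Qed.

End PastureArithmetic.

Lemma hom_eq0 (P Q : Pasture) (h : PastureHom P Q) (x : P) :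
  h x = pzero Q -> x = pzero P.
Proof.
  intro Hhx. apply NNPP. intro Hx. destruct (pinv_ex _ Hx) as [y [_ Hxy]].
  apply (pone_neq0 Q).
  now rewrite <- (h1 h), <- Hxy, hmul, Hhx, pmul0l.
Qed.

Section Quotient.

Variable P : Pasture.
Variable R : P -> P -> Prop.
Context {R_equiv : Equivalence R}.
Hypothesis R_mull : forall c a b, R a b -> R (pmul P c a) (pmul P c b).
Hypothesis R_zero : forall a, R a (pzero P) -> a = pzero P.

Lemma congruence_mul a b c d : R a b -> R c d -> R (pmul P a c) (pmul P b d).
Proof.
  intros Hab Hcd. transitivity (pmul P a d); [now apply R_mull|].
  rewrite (pmulC a), (pmulC b). now apply R_mull.
Qed.

Lemma congruence_neg a b : R a b -> R (pneg P a) (pneg P b).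
Proof. rewrite !(pnegE a), (pnegE b). apply R_mull. Qed.

Definition quot : Type := {S : P -> Prop | exists a, S = R a}.

Definition class_of (a : P) : quot := exist _ (R a) (ex_intro _ a eq_refl).

Lemma class_eqP a b : class_of a = class_of b <-> R a b.
Proof.
  split.
  - intro Eab. apply (f_equal (@proj1_sig _ _)) in Eab. simpl in Eab.
    rewrite Eab. reflexivity.
  - intro Hab. apply eq_sig_hprop; [intros; apply proof_irrelevance|]. simpl.
    apply functional_extensionality. intro c.
    apply propositional_extensionality. now rewrite Hab.
Qed.

Lemma class_of_surj (S : quot) : exists a, S = class_of a.
Proof.
  destruct S as [s [a Ha]]. exists a.
  apply eq_sig_hprop; [intros; apply proof_irrelevance|exact Ha].
Qed.

Definition repr (S : quot) : P :=
  proj1_sig (constructive_indefinite_description _ (class_of_surj S)).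

Lemma repr_class a : R (repr (class_of a)) a.
Proof.
  apply class_eqP. unfold repr.
  destruct (constructive_indefinite_description _ _) as [b Hb]. now simpl.
Qed.

Definition quot_mul (A B : quot) : quot := class_of (pmul P (repr A) (repr B)).
Definition quot_neg (A : quot) : quot := class_of (pneg P (repr A)).
Definition quot_null (A B C : quot) : Prop :=
  exists a b c, A = class_of a /\ B = class_of b /\ C = class_of c /\ pnull P a b c.

Lemma quot_mul_class a b : quot_mul (class_of a) (class_of b) = class_of (pmul P a b).
Proof. apply class_eqP, congruence_mul; apply repr_class. Qed.

Lemma quot_neg_class a : quot_neg (class_of a) = class_of (pneg P a).
Proof. apply class_eqP, congruence_neg, repr_class. Qed.

Lemma class_neq0 a : class_of a <> class_of (pzero P) <-> a <> pzero P.
Proof.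
  split; intros Ha Ea.
  - now subst.
  - now apply Ha, R_zero, class_eqP.
Qed.

Ltac elim_classes :=
  repeat match goal with
  | S : quot |- _ => let a := fresh "a" in destruct (class_of_surj S) as [a ->]; clear S
  end.

Definition quotient_pasture : Pasture.
Proof.
  refine {| carrier := quot; pzero := class_of (pzero P); pone := class_of (pone P);
            pmul := quot_mul; pneg := quot_neg; pnull := quot_null |}.
  - intros; elim_classes. now rewrite !quot_mul_class, pmulA.
  - intros; elim_classes. now rewrite !quot_mul_class, pmul1l.
  - intros; elim_classes. now rewrite !quot_mul_class, pmul1r.
  - intros; elim_classes. now rewrite !quot_mul_class, pmul0l.
  - intros; elim_classes. now rewrite !quot_mul_class, pmul0r.
  - apply class_neq0, pone_neq0.
  - intros x y; elim_classes. rewrite quot_mul_class, !class_neq0. apply pmul_neq0.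
  - intros x y; elim_classes. now rewrite !quot_mul_class, pmulC.
  - intros x; elim_classes. rewrite class_neq0. intro Ha.
    destruct (pinv_ex _ Ha) as [b [Hb Hab]]. exists (class_of b).
    now rewrite class_neq0, quot_mul_class, Hab.
  - intros; elim_classes. now rewrite !quot_neg_class, pnegK.
  - now rewrite quot_neg_class, pneg0.
  - intros ? ? ? (a & b & c & -> & -> & -> & Habc).
    exists b, a, c. auto using pnull_perm12.
  - intros ? ? ? (a & b & c & -> & -> & -> & Habc).
    exists a, c, b. auto using pnull_perm23.
  - intros D ? ? ? (a & b & c & -> & -> & -> & Habc); elim_classes.
    rewrite !quot_mul_class. do 3 eexists. repeat split. now apply pnull_scale.
  - intros A B. destruct (class_of_surj A) as [a ->], (class_of_surj B) as [b ->].
    rewrite quot_neg_class. split.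
    + intros (a' & b' & c & Ea & Eb & Ec & Habc).
      apply class_eqP in Ea, Eb. apply class_eqP, symmetry, R_zero in Ec. subst c.
      apply pnull_zero in Habc. subst a'.
      apply class_eqP. rewrite Ea. now apply congruence_neg, symmetry.
    + intros ->. exists (pneg P b), b, (pzero P). repeat split.
      now apply pnull_zero.
Defined.

Definition quot_proj : PastureHom P quotient_pasture.
Proof.
  refine {| hfun := class_of : P -> quotient_pasture |}; simpl.
  - intros. symmetry. apply quot_mul_class.
  - reflexivity.
  - reflexivity.
  - intros. symmetry. apply quot_neg_class.
  - intros a b c Habc. exists a, b, c. auto.
Defined.

Lemma quot_proj_eq a b : R a b -> quot_proj a = quot_proj b.
Proof. apply class_eqP. Qed.

Lemma quot_hom_ext (Q' : Pasture) (u v : PastureHom quotient_pasture Q') :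
  (forall a, u (quot_proj a) = v (quot_proj a)) -> forall z, u z = v z.
Proof. intros Huv z. destruct (class_of_surj z) as [a ->]. apply Huv. Qed.

Section Lift.

Variables (Q' : Pasture) (h : PastureHom P Q').
Hypothesis h_R : forall a b, R a b -> h a = h b.

Lemma h_repr a : h (repr (class_of a)) = h a.
Proof. apply h_R, repr_class. Qed.

Definition quot_lift : PastureHom quotient_pasture Q'.
Proof.
  refine {| hfun := fun S : quotient_pasture => h (repr S) |}; simpl.
  - intros A B; elim_classes. unfold quot_mul. now rewrite h_repr, hmul, !h_repr.
  - rewrite h_repr. apply h0.
  - rewrite h_repr. apply h1.
  - intros A; elim_classes. unfold quot_neg. now rewrite h_repr, hneg, h_repr.
  - intros ? ? ? (a & b & c & -> & -> & -> & Habc).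
    rewrite !h_repr. now apply hnull.
Defined.

Lemma quot_lift_proj a : quot_lift (quot_proj a) = h a.
Proof. apply h_repr. Qed.

End Lift.

End Quotient.

Arguments quotient_pasture {P R R_equiv} R_mull R_zero.
Arguments quot_proj {P R R_equiv R_mull R_zero}.
Arguments quot_lift {P R R_equiv R_mull R_zero Q'} h h_R.

Section Coequalizer.

Variables (P1 P2 : Pasture) (f g : PastureHom P1 P2).

Inductive coeq_step : P2 -> P2 -> Prop :=
  coeq_step_intro x d : coeq_step (pmul P2 d (f x)) (pmul P2 d (g x)).

Definition coeq_rel : P2 -> P2 -> Prop := clos_refl_sym_trans P2 coeq_step.

#[local] Instance coeq_rel_equiv : Equivalence coeq_rel.
Proof.
  split.
  - intro a. apply rst_refl.
  - intros a b. apply rst_sym.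
  - intros a b c. apply rst_trans.
Qed.

Lemma coeq_rel_fg x : coeq_rel (f x) (g x).
Proof. apply rst_step. rewrite <- (pmul1l P2 (f x)), <- (pmul1l P2 (g x)). constructor. Qed.

Lemma coeq_rel_mull c a b : coeq_rel a b -> coeq_rel (pmul P2 c a) (pmul P2 c b).
Proof.
  induction 1 as [a b [x d]| | |]; try (econstructor; eassumption).
  apply rst_step. rewrite !pmulA. constructor.
Qed.

Lemma coeq_step_eq0 a b : coeq_step a b -> (a = pzero P2 <-> b = pzero P2).
Proof.
  intros [x d].
  split; intros [-> | Hfgx%hom_eq0]%pmul_eq0; rewrite ?pmul0l; try reflexivity;
    subst x; now rewrite h0, pmul0r.
Qed.

Lemma coeq_rel_zero a : coeq_rel a (pzero P2) -> a = pzero P2.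
Proof.
  enough (Heq0 : forall b c, coeq_rel b c -> (b = pzero P2 <-> c = pzero P2)).
  { intro Ha. now apply (Heq0 _ _ Ha). }
  induction 1; auto using coeq_step_eq0; tauto.
Qed.

Lemma coeq_rel_hom (Q' : Pasture) (h : PastureHom P2 Q') :
  (forall x, h (f x) = h (g x)) -> forall a b, coeq_rel a b -> h a = h b.
Proof.
  intros Hfg a b. induction 1 as [a b [x d]| | |]; try congruence.
  now rewrite !hmul, Hfg.
Qed.

Definition coequalizer : Pasture := quotient_pasture coeq_rel_mull coeq_rel_zero.

End Coequalizer.

Theorem theorem5p5 :
  forall (P1 P2 : Pasture) (f g : PastureHom P1 P2),
  exists (Q : Pasture) (q : PastureHom P2 Q),
    (forall x, q (f x) = q (g x)) /\
    (forall (Q' : Pasture) (q' : PastureHom P2 Q'),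
       (forall x, q' (f x) = q' (g x)) ->
       exists u : PastureHom Q Q',
         (forall y, u (q y) = q' y) /\
         (forall u' : PastureHom Q Q',
            (forall y, u' (q y) = q' y) -> forall z, u' z = u z)).
Proof.
  intros P1 P2 f g.
  exists (coequalizer f g), quot_proj.
  split.
  - intro x. apply quot_proj_eq, coeq_rel_fg.
  - intros Q' q' Hq'.
    pose proof (coeq_rel_hom q' Hq') as q'_coeq.
    exists (quot_lift q' q'_coeq).
    split; [apply quot_lift_proj|].
    intros u' Hu'. apply quot_hom_ext. intro a.
    now rewrite Hu', quot_lift_proj.
Qed.
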